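(* Blocker has a strategy ensuring $g_{\mathrm{ECB}}(n,K_3)\le (1+o(1))\frac{2n}{3}$ as $n\to\infty$.
   Context: Embedded Constructor-Blocker game: the vertices of $K_n$ are placed at the $n$-th roots of unity in the complex plane, and each edge is drawn as the straight chord inside the unit disk between its endpoints. Constructor and Blocker alternately claim previously unclaimed edges, Constructor moving first. Constructor may only claim an edge whose chord does not cross (in an interior point) any chord she has already claimed; Blocker may claim any unclaimed edge. The game ends when Constructor cannot claim any more edges or all edges are claimed. The score is the number of triangles in Constructor's graph at the end; Constructor maximizes it, Blocker minimizes it. $g_{\mathrm{ECB}}(n,K_3)$ denotes the score under optimal play. *)

From HB Require Import structures.
From mathcomp Require Import all_boot all_order all_algebra.
Set Implicit Arguments. Unset Strict Implicit. Unset Printing Implicit Defensive.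
Import Order.TTheory GRing.Theory Num.Theory.

(* Vertices of K_n are 'I_n; vertex k sits at the root of unity exp(2 pi i k/n).
   An edge is a pair (a, b) with a < b (the chord between the two points). *)
Definition edge (n : nat) := ('I_n * 'I_n)%type.

Definition edges (n : nat) : {set edge n} := [set e : edge n | e.1 < e.2].

(* Two chords of points in convex (circular) position cross in an interior
   point iff their endpoints are pairwise distinct and interleave in the
   cyclic order, i.e. a < c < b < d or c < a < d < b. *)
Definition cross n (e f : edge n) : bool :=
  ((e.1 < f.1) && (f.1 < e.2) && (e.2 < f.2)) ||
  ((f.1 < e.1) && (e.1 < f.2) && (f.2 < e.2)).

Definition triangles n (C : {set edge n}) : nat :=
  #|[set t : 'I_n * 'I_n * 'I_n |
      [&& t.1.1 < t.1.2, t.1.2 < t.2,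
          (t.1.1, t.1.2) \in C, (t.1.2, t.2) \in C & (t.1.1, t.2) \in C]]|.

(* Unclaimed edges, given Constructor's edges C and Blocker's edges B. *)
Definition unclaimed n (C B : {set edge n}) : {set edge n} :=
  [set e in edges n | (e \notin C) && (e \notin B)].

Definition avail n (C B : {set edge n}) : {set edge n} :=
  [set e in unclaimed C B | [forall f in C, ~~ cross e f]].

(* Upper bound used as the neutral starting value of the iterated minimum
   (every triangle count is at most this). *)
Definition topval n : nat := #|{: 'I_n * 'I_n * 'I_n}|.

(* Minimax value of the position (C, B) with [cturn] = Constructor to move,
   with fuel m (the number of still unclaimed edges suffices). *)
Fixpoint val n (m : nat) (C B : {set edge n}) (cturn : bool) : nat :=
  match m with
  | 0 => triangles C
  | m'.+1 =>
    if avail C B == set0 then triangles C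
    else if cturn then \max_(e in avail C B) val m' (e |: C) B false
    else \big[minn/topval n]_(e in unclaimed C B) val m' C (e |: B) true
  end.

Definition gECB (n : nat) : nat := @val n #|edges n| set0 set0 true.

From Pilot Require Import Defs.
From mathcomp Require Import all_boot all_order all_algebra.
From mathcomp Require Import zify lra.
Import Order.TTheory GRing.Theory Num.Theory.

Set Implicit Arguments.
Unset Strict Implicit.
Unset Printing Implicit Defensive.

(** Blocker pairs up the edges (3k, 3k+1) and (3k+1, 3k+2) of each block of
    three consecutive vertices and answers Constructor's claim of one of them
    by claiming the other, so Constructor never owns both.  Constructor's
    graph is non-crossing, so a triangle is determined by its middle vertex;
    two consecutive vertices x, x+1 can both be middle vertices only if the
    chord (x, x+1) is present.  Hence every block contains a vertex that is
    not a middle vertex, and at most n - n/3 triangles arise. *)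

Definition noncrossing n (C : {set edge n}) := {in C &, forall e f, ~~ cross e f}.

Lemma crossC n (e f : edge n) : cross e f = cross f e.
Proof. by rewrite /cross orbC. Qed.

Lemma crossxx n (e : edge n) : cross e e = false.
Proof. by rewrite /cross; lia. Qed.

Lemma noncrossingU1 n (C B : {set edge n}) e :
  noncrossing C -> e \in avail C B -> noncrossing (e |: C).
Proof.
move=> ncC; rewrite inE => /andP[_ /forall_inP e_ok] f g.
rewrite !in_setU1 => /predU1P[->|fC] /predU1P[->|gC].
- by rewrite crossxx.
- exact: e_ok.
- by rewrite crossC e_ok.
- exact: ncC.
Qed.

Section Middles.
Variables (n : nat) (C : {set edge n}).
Hypothesis ncC : noncrossing C.

Definition triangle_set : {set 'I_n * 'I_n * 'I_n} :=
  [set t : 'I_n * 'I_n * 'I_n |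
      [&& t.1.1 < t.1.2, t.1.2 < t.2,
          (t.1.1, t.1.2) \in C, (t.1.2, t.2) \in C & (t.1.1, t.2) \in C]].

Definition middles : {set 'I_n} := [set t.1.2 | t in triangle_set].

Lemma middle_inj : {in triangle_set &, injective (fun t => t.1.2)}.
Proof.
move=> [[a b] c] [[a' b'] c']; rewrite !inE /=.
move=> /and5P[lt_ab lt_bc ab bc ac] /and5P[lt_ab' lt_bc' ab' bc' ac'] /= eb; subst b'.
have ea : a = a'.
  apply: val_inj; have := ncC ab' ac; have := ncC ab ac'; rewrite /cross /=; lia.
have ec : c = c'.
  apply: val_inj; have := ncC ac bc'; have := ncC ac' bc; rewrite /cross /=; lia.
by rewrite ea ec.
Qed.

Lemma card_middles : #|middles| = triangles C.
Proof. by rewrite card_in_imset //; exact: middle_inj. Qed.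

Lemma middles_succ (x y : 'I_n) : y = x.+1 :> nat -> (x, y) \notin C ->
  (x \notin middles) || (y \notin middles).
Proof.
move=> exy xyC; rewrite -negb_and; apply/andP.
case=> /imsetP[[[a b] c] + /= ex] /imsetP[[[a' b'] c'] + /= ey]; subst b b'.
rewrite !inE /= => /and5P[_ lt_xc _ xc _] /and5P[lt_a'y _ a'y _ _].
have cy : c <> y :> nat by move=> /val_inj cy; rewrite -cy xc in xyC.
have a'x : a' <> x :> nat by move=> /val_inj a'x; rewrite -a'x a'y in xyC.
(* otherwise the chords (a', y) and (x, c) would cross *)
have := ncC a'y xc; rewrite /cross /=; lia.
Qed.

End Middles.

Definition step_edge n (i : nat) : edge n.+1 := (inord i, inord i.+1).

Lemma step_edge_mem n i : i < n -> step_edge n i \in edges n.+1.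
Proof. by move=> lt_in; rewrite inE /= !inordK //; lia. Qed.

Lemma step_edge_inj n i j : i < n -> j < n -> step_edge n i = step_edge n j -> i = j.
Proof. by move=> lt_in lt_jn [/(congr1 val)]; rewrite /= !inordK //; lia. Qed.

Lemma exists_nonmiddle n (C : {set edge n.+1}) i : noncrossing C -> i < n ->
  step_edge n i \notin C ->
  exists2 x : 'I_n.+1, x \notin middles C & (x == i :> nat) || (x == i.+1 :> nat).
Proof.
move=> ncC lt_in iC.
have succ_i : (inord i.+1 : 'I_n.+1) = (inord i : 'I_n.+1).+1 :> nat.
  by rewrite !inordK //; lia.
have /orP[xM|yM] := middles_succ ncC succ_i iC.
- by exists (inord i) => //; rewrite inordK ?eqxx //; lia.
- by exists (inord i.+1) => //; rewrite inordK ?eqxx ?orbT.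
Qed.

Lemma triangles_le_blocks n (C : {set edge n.+1}) : noncrossing C ->
  (forall k : 'I_(n.+1 %/ 3),
     (step_edge n (3 * k) \notin C) || (step_edge n (3 * k).+1 \notin C)) ->
  triangles C <= n.+1 - n.+1 %/ 3.
Proof.
move=> ncC blocks.
have nonmiddle (k : 'I_(n.+1 %/ 3)) :
    exists2 x : 'I_n.+1, x \notin middles C & x %/ 3 = k.
  have lt_k := ltn_ord k.
  have [i i_k iC] :
      exists2 i, (i == 3 * k) || (i == (3 * k).+1) & step_edge n i \notin C.
    by case/orP: (blocks k) => iC; [exists (3 * k) | exists (3 * k).+1];
      rewrite ?eqxx ?orbT.
  have [|x xM ix] := exists_nonmiddle ncC _ iC; first lia.
  by exists x => //; lia.
have [f fM f_k] := fin_all_exists2 nonmiddle.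
have f_inj : injective f.
  by move=> k1 k2 e12; apply: ord_inj; rewrite -(f_k k1) -(f_k k2) e12.
have M_sub : middles C \subset ~: [set f k | k in 'I_(n.+1 %/ 3)].
  apply/subsetP => x xM; rewrite inE; apply/imsetP => -[k _ xk].
  by move: (fM k); rewrite -xk xM.
rewrite -(card_middles ncC); apply: leq_trans (subset_leq_card M_sub) _.
by rewrite cardsCs setCK card_imset // !card_ord.
Qed.

Section PairingStrategy.
Variables (n : nat) (I : finType) (a b : I -> edge n).
Hypotheses (a_edge : forall i, a i \in edges n) (b_edge : forall i, b i \in edges n).
Hypotheses (a_inj : injective a) (b_inj : injective b).
Hypothesis a_neq_b : forall i j, a i != b j.

(* [val] does not force [C] and [B] to be disjoint, hence the [\notin C]
   in the cases where Blocker owns an edge of the pair. *)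
Definition pair_safe (C B : {set edge n}) i :=
  [|| (a i \notin C) && (b i \notin C),
      (a i \in B) && (a i \notin C) | (b i \in B) && (b i \notin C)].

Lemma pair_safe_free C B i : pair_safe C B i -> (a i \notin C) || (b i \notin C).
Proof. by case/or3P=> /andP[] => [-> // | _ -> // | _ ->]; rewrite orbT. Qed.

Lemma pair_safeU1_free C B e i : pair_safe C B i -> e \in unclaimed C B ->
  (a i \notin e |: C) || (b i \notin e |: C).
Proof.
move=> safe; rewrite inE => /and3P[_ _ eB]; rewrite !in_setU1.
have ne_B x : x \in B -> (x == e) = false by apply: contraTF => /eqP->.
case/or3P: safe => [/andP[aC bC]|/andP[aB aC]|/andP[bB bC]].
- case: (eqVneq (a i) e) => [ae|_]; last by rewrite (negbTE aC).
  by rewrite (negbTE bC) -ae eq_sym (negbTE (a_neq_b i i)) orbT.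
- by rewrite (ne_B _ aB) (negbTE aC).
- by rewrite (ne_B _ bB) (negbTE bC) orbT.
Qed.

Lemma pair_safe_reply C B e f i : pair_safe C B i -> e \in unclaimed C B ->
  (e = a i -> b i \in unclaimed (e |: C) B -> f = b i) ->
  (e = b i -> a i \in unclaimed (e |: C) B -> f = a i) ->
  pair_safe (e |: C) (f |: B) i.
Proof.
move=> safe; rewrite inE => /and3P[_ _ eB] reply_a reply_b.
have ne_B x : x \in B -> (x == e) = false by apply: contraTF => /eqP->.
have ab := a_neq_b i i.
rewrite /pair_safe !in_setU1.
case/or3P: safe => [/andP[aC bC]|/andP[aB aC]|/andP[bB bC]]; last first.
- by rewrite bB (ne_B _ bB) (negbTE bC) !orbT.
- by rewrite aB (ne_B _ aB) (negbTE aC) !orbT.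
case: (eqVneq (a i) e) => [ae|ane]; last case: (eqVneq (b i) e) => [be|_].
- have be : (b i == e) = false by rewrite -ae eq_sym (negbTE ab).
  rewrite be (negbTE bC) /= andbT orbC.
  have [bB|bB] := boolP (b i \in B); first by rewrite orbT.
  rewrite (reply_a (esym ae)) ?eqxx //.
  by rewrite inE b_edge in_setU1 be (negbTE bC) bB.
- rewrite (negbTE aC) /= andbT.
  have [aB|aB] := boolP (a i \in B); first by rewrite orbT.
  rewrite (reply_b (esym be)) ?eqxx //.
  by rewrite inE a_edge in_setU1 (negbTE ane) (negbTE aC) aB.
- by rewrite (negbTE aC) (negbTE bC).
Qed.

Lemma blocker_reply C B e g : (forall i, pair_safe C B i) ->
  e \in unclaimed C B -> g \in unclaimed (e |: C) B ->
  exists2 f, f \in unclaimed (e |: C) B & forall i, pair_safe (e |: C) (f |: B) i.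
Proof.
move=> safe eU gU; set U := unclaimed (e |: C) B.
have [i /andP[/eqP ea bU] | no_a] := pickP (fun i => (e == a i) && (b i \in U)).
  exists (b i) => // j; apply: pair_safe_reply => // [eaj _|ebj _].
  - by congr b; apply: a_inj; rewrite -ea.
  - by move: (a_neq_b i j); rewrite -ea ebj eqxx.
have [i /andP[/eqP eb aU] | no_b] := pickP (fun i => (e == b i) && (a i \in U)).
  exists (a i) => // j; apply: pair_safe_reply => // [eaj _|ebj _].
  - by move: (a_neq_b j i); rewrite -eb eaj eqxx.
  - by congr a; apply: b_inj; rewrite -eb.
exists g => // j; apply: pair_safe_reply => // [eaj bU|ebj aU].
- by move: (no_a j); rewrite eaj eqxx bU.
- by move: (no_b j); rewrite ebj eqxx aU.
Qed.

Variable bound : nat.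
Hypothesis triangles_le_bound : forall C, noncrossing C ->
  (forall i, (a i \notin C) || (b i \notin C)) -> triangles C <= bound.

Lemma val_pairing_strategy m C B : noncrossing C ->
  (forall i, pair_safe C B i) -> Defs.val m C B true <= bound.
Proof.
elim/ltn_ind: m C B => m IH C B ncC safe.
have C_bound : triangles C <= bound.
  by apply: triangles_le_bound => // i; exact: pair_safe_free.
case: m IH => [|m] IH /=; first exact: C_bound.
case: ifP => _; first exact: C_bound.
apply/bigmax_leqP => e eA.
have eU : e \in unclaimed C B by move: eA; rewrite inE => /andP[].
have ncCe := noncrossingU1 ncC eA.
have Ce_bound : triangles (e |: C) <= bound.
  by apply: triangles_le_bound => // i; exact: pair_safeU1_free.
case: m IH => [|m] IH /=; first exact: Ce_bound.
case: ifP => [_|/negbT/set0Pn[g gA]]; first exact: Ce_bound.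
have gU : g \in unclaimed (e |: C) B by move: gA; rewrite inE => /andP[].
have [f fU safe'] := blocker_reply safe eU gU.
rewrite -minEnat.
exact: (@bigmin_inf _ nat _ _ f _ _ _ fU (IH _ (ltnW _) _ _ ncCe safe')).
Qed.

End PairingStrategy.

Lemma gECB_le n : gECB n.+1 <= n.+1 - n.+1 %/ 3.
Proof.
have lt_b (k : 'I_(n.+1 %/ 3)) : (3 * k).+1 < n by have := ltn_ord k; lia.
have lt_a (k : 'I_(n.+1 %/ 3)) : 3 * k < n by have := lt_b k; lia.
pose a (k : 'I_(n.+1 %/ 3)) := step_edge n (3 * k).
pose b (k : 'I_(n.+1 %/ 3)) := step_edge n (3 * k).+1.
rewrite /gECB; apply: (@val_pairing_strategy _ _ a b).
- by move=> k; apply/step_edge_mem/lt_a.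
- by move=> k; apply/step_edge_mem/lt_b.
- move=> k1 k2 /step_edge_inj e12; apply: ord_inj.
  by have := e12 (lt_a k1) (lt_a k2); lia.
- move=> k1 k2 /step_edge_inj e12; apply: ord_inj.
  by have := e12 (lt_b k1) (lt_b k2); lia.
- move=> k1 k2; apply/eqP => /step_edge_inj e12.
  by have := e12 (lt_a k1) (lt_b k2); lia.
- exact: triangles_le_blocks.
- by move=> e f; rewrite inE.
- by move=> k; rewrite /pair_safe !inE.
Qed.

Local Open Scope ring_scope.

Theorem proposition4p3 :
  forall eps : rat, 0 < eps ->
  exists N : nat, forall n : nat, (N <= n)%N ->
    (gECB n)%:R <= (1 + eps) * (2 * n%:R / 3) :> rat.
Proof.
move=> eps eps_gt0; exists (Num.truncn eps^-1).+1 => -[//|n] n_large.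
have eps_n : 1 < eps * n.+1%:R.
  have inv_lt : eps^-1 < n.+1%:R by rewrite -truncn_lt_nat ?invr_ge0 ?ltW.
  by rewrite -(ltr_pM2l eps_gt0) mulfV ?gt_eqF in inv_lt.
have g_le : 3 * (gECB n.+1)%:R <= 2 * n.+1%:R + 2 :> rat.
  have : (3 * gECB n.+1 <= 2 * n.+1 + 2)%N by have := gECB_le n; lia.
  by rewrite -(ler_nat rat) natrD !natrM.
lra.
Qed.
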